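(* Let $S$ be an integral domain of characteristic zero, and let $R$ be a subring of $S$. Suppose $g,h\in S[x]$ are monic polynomials with zero constant term (i.e. $g,h\in xS[x]$) such that $g(h(x))\in R[x]$. Then all coefficients of $g$ and of $h$ lie in $\mathbb{Q}.R$.
   Context: Here $\mathbb{Q}.R$ denotes the subring of the fraction field of $S$ generated by $\mathbb{Q}$ and $R$, i.e. the set of elements $r/n$ with $r\in R$ and $n$ a positive integer (this makes sense since $S$ has characteristic zero). *)

From HB Require Import structures.
From mathcomp Require Import all_boot all_order all_algebra.
From mathcomp Require Import fraction.
Set Implicit Arguments. Unset Strict Implicit. Unset Printing Implicit Defensive.
Import Order.TTheory GRing.Theory Num.Theory.
Local Open Scope ring_scope.

(* Q.R : the subring of the fraction field of S generated by Q and R,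
   i.e. the elements r/n with r in R and n a positive integer.
   [in_QR R x] : the element x of S, viewed in {fraction S}, lies in Q.R. *)
Definition in_QR (S : idomainType) (R : {pred S}) (x : S) : Prop :=
  exists (r : S) (n : nat), [/\ r \in R, (0 < n)%N & @FracField.tofrac S x = @FracField.tofrac S r / (n%:R : {fraction S})].

(* We embed everything in the fraction field K of S, where Q.R is a predicate
   A closed under the ring operations and under division by positive
   integers, and argue for an arbitrary such A (section
   CoefficientsInQSubring).  Write m = deg g, n = deg h, D = (m - 1) n.
   - The coefficients of h are determined from the top down: for 0 < j < n,
     the coefficient of g(h) in degree j + D is m h_j plus a polynomial
     expression in h_(j+1), ..., h_n (coef_comp_recover), so h_j lies in A
     once the higher coefficients do.
   - Knowing h, the coefficients of g are peeled off from the top as well: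
     lead_coef (p \Po h) = lead_coef p for monic h (polyA_comp_left). *)

From HB Require Import structures.
From mathcomp Require Import all_boot all_order all_algebra.
From mathcomp Require Import fraction.
From mathcomp Require Import zify.
Import Order.TTheory GRing.Theory Num.Theory.
Local Open Scope ring_scope.
Set Implicit Arguments. Unset Strict Implicit. Unset Printing Implicit Defensive.

Section PolyCoefficients.
Variable R : idomainType.
Implicit Types p q e T G H : {poly R}.

Lemma coefM_top e T j d : (size e <= j.+1)%N -> (size T <= d.+1)%N ->
  (e * T)`_(j + d) = e`_j * T`_d.
Proof.
move=> size_e size_T; have j_lt : (j < (j + d).+1)%N by lia.
rewrite coefM (bigD1 (Ordinal j_lt)) //= addKn big1 ?addr0 // => -[i lt_i] /=.
move=> /eqP ne_ij; have [i_lt_j|j_le_i] := ltnP i j.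
  by rewrite (leq_sizeP _ _ size_T) ?mulr0 //; lia.
have ne : i <> j by move=> eq_ij; apply: ne_ij; exact: val_inj.
by rewrite (leq_sizeP _ _ size_e) ?mul0r //; lia.
Qed.

Lemma sum_monic_same_size m d (F : 'I_m -> {poly R}) :
  (forall i, F i \is monic) -> (forall i, size (F i) = d.+1) ->
  (size (\sum_i F i)%R <= d.+1)%N /\ (\sum_i F i)`_d = m%:R.
Proof.
move=> monF sizeF; split.
  by apply: (leq_trans (size_sum _ _ _)); apply/bigmax_leqP => i _; rewrite sizeF.
rewrite coef_sum (eq_bigr (fun _ => 1)) ?sumr_const ?card_ord // => i _.
by have /monicP := monF i; rewrite lead_coefE sizeF.
Qed.

Lemma size_monic_exp p n k : p \is monic -> size p = n.+1 ->
  size (p ^+ k) = (n * k).+1.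
Proof.
move=> mon_p size_p; have := size_exp p k; rewrite size_p /= => <-.
by rewrite prednK // lt0n size_poly_eq0 monic_neq0 ?monic_exp.
Qed.

Lemma size_sub_same_lead p q n : size p = n.+1 -> size q = n.+1 ->
  lead_coef p = lead_coef q -> (size (p - q)%R <= n)%N.
Proof.
move=> size_p size_q eq_lead; apply/leq_sizeP => i le_ni; rewrite coefB.
have [->|ne_in] := eqVneq i n.
  by move: eq_lead; rewrite !lead_coefE size_p size_q /= => ->; rewrite subrr.
by rewrite !nth_default ?subrr // ?size_p ?size_q; lia.
Qed.

Lemma coef_comp_high G H m n k : G \is monic -> size G = m.+1 ->
  size H = n.+1 -> (m.-1 * n < k)%N -> (G \Po H)`_k = (H ^+ m)`_k.
Proof.
move=> mon_G size_G size_H lt_k; apply/eqP; rewrite -subr_eq0 -coefB.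
rewrite -comp_Xn_poly -comp_polyB; apply/eqP/(leq_sizeP _ _ _ _ (leqnn _)).
apply: leq_trans (size_comp_poly_leq _ _) _; rewrite size_H /=.
have := size_sub_same_lead size_G (size_polyXn _ m).
rewrite (monicP mon_G) lead_coefXn => /(_ erefl) le_m; apply: leq_trans lt_k.
by rewrite ltnS leq_mul2r -!subn1 leq_sub2r ?orbT.
Qed.

(* Split H = e + H' where e := take_poly j.+1 H collects the
   coefficients of degree <= j; for 0 < j < deg H, H' is monic of the same
   degree as H.  Then H ^+ m - H' ^+ m = e * T where T, a sum of m monic
   polynomials of degree D := (m - 1) deg H, has coefficient m in degree D;
   so in degree j + D the
   composition G \Po H exhibits m H_j next to a coefficient of H' ^+ m, which
   only involves the coefficients of H of degree > j. *)
Lemma coef_comp_recover G H m n j : G \is monic -> H \is monic ->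
  size G = m.+1 -> size H = n.+1 -> (0 < j < n)%N ->
  (G \Po H)`_(j + m.-1 * n) =
    ((H - take_poly j.+1 H) ^+ m)`_(j + m.-1 * n) + H`_j *+ m.
Proof.
move=> mon_G mon_H size_G size_H /andP[j_gt0 lt_jn].
set D := (m.-1 * n)%N; set e := take_poly j.+1 H; set H' := H - e.
have size_e : (size e <= j.+1)%N by exact: size_take_poly.
have size_e_lt : (size (- e) < size H)%N.
  by rewrite size_polyN size_H ltnS (leq_trans size_e).
have size_H' : size H' = n.+1 by rewrite size_polyDl.
have mon_H' : H' \is monic by apply/monicP; rewrite lead_coefDl // (monicP mon_H).
set T := \sum_(i < m) H ^+ (m.-1 - i) * H' ^+ i.
have [size_T T_D] : (size T <= D.+1)%N /\ T`_D = m%:R.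
  apply: sum_monic_same_size => i; first by rewrite rpredM ?monic_exp.
  rewrite size_monicM ?monic_exp ?monic_neq0 ?monic_exp //.
  rewrite (size_monic_exp _ mon_H size_H) (size_monic_exp _ mon_H' size_H').
  have le_im : (i <= m.-1)%N by have := ltn_ord i; lia.
  by rewrite addSn addnS /= -mulnDr subnK // mulnC.
have diff_pow : H ^+ m - H' ^+ m = e * T by rewrite subrXX /H' opprB addrC subrK.
rewrite (coef_comp_high mon_G size_G size_H); last first.
  by rewrite -[X in (X < _)%N]add0n ltn_add2r.
rewrite -[H ^+ m](subrK (H' ^+ m)) diff_pow coefD coefM_top // T_D.
by rewrite /e coef_take_poly ltnSn mulr_natr addrC.
Qed.

Lemma monic_coef0_size p : p \is monic -> p`_0 = 0 -> (1 < size p)%N.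
Proof.
move=> /monicP + p0; rewrite lead_coefE.
by case: (size p) => [|[|s]] //=; rewrite p0 => /eqP; rewrite eq_sym oner_eq0.
Qed.

End PolyCoefficients.

Section CoefficientsInQSubring.
Variables (K : fieldType) (A : K -> Prop).
Hypothesis charK0 : [pchar K] =i pred0.
Implicit Types p q : {poly K}.
Hypothesis A1 : A 1.
Hypothesis AB : forall x y, A x -> A y -> A (x - y).
Hypothesis AM : forall x y, A x -> A y -> A (x * y).
Hypothesis A_divn : forall x n, (0 < n)%N -> A x -> A (x / n%:R).

Lemma A0 : A 0. Proof. by rewrite -(subrr 1); apply: AB. Qed.

Lemma AD x y : A x -> A y -> A (x + y).
Proof.
move=> Ax Ay; rewrite -[y]opprK; apply: AB => //.
by rewrite -sub0r; apply: AB => //; exact: A0.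
Qed.

Definition polyA (p : {poly K}) := forall i, A p`_i.

Lemma polyA_01 p : (forall i, p`_i = 0 \/ p`_i = 1) -> polyA p.
Proof. by move=> p01 i; case: (p01 i) => ->; [exact: A0 | exact: A1]. Qed.

Lemma polyAB p q : polyA p -> polyA q -> polyA (p - q).
Proof. by move=> Ap Aq i; rewrite coefB; apply: AB. Qed.

Lemma polyAD p q : polyA p -> polyA q -> polyA (p + q).
Proof. by move=> Ap Aq i; rewrite coefD; apply: AD. Qed.

Lemma polyAZ c p : A c -> polyA p -> polyA (c *: p).
Proof. by move=> Ac Ap i; rewrite coefZ; apply: AM. Qed.

Lemma polyAM p q : polyA p -> polyA q -> polyA (p * q).
Proof.
move=> Ap Aq i; rewrite coefM.
by apply: (big_ind A); [exact: A0 | exact: AD | move=> j _; apply: AM].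
Qed.

Lemma polyAX p n : polyA p -> polyA (p ^+ n).
Proof.
move=> Ap; elim: n => [|n IHn]; last by rewrite exprS; apply: polyAM.
by apply: polyA_01 => i; rewrite coef1; case: (i == 0)%N; [right | left].
Qed.

Lemma polyAXn d : polyA 'X^d.
Proof. by apply: polyA_01 => i; rewrite coefXn; case: (i == d); [right | left]. Qed.

(* If H is nonconstant, monic and has coefficients in A, then so does any p
   such that p \Po H does: peel off the leading terms of p one at a time,
   since lead_coef (p \Po H) = lead_coef p. *)
Lemma polyA_comp_left (H p : {poly K}) : H \is monic -> (1 < size H)%N ->
  polyA H -> polyA (p \Po H) -> polyA p.
Proof.
move=> mon_H size_H AH; elim: {p}(size p) {-2}p (leqnn (size p)) => [|n IHn] p.
  by rewrite leqn0 size_poly_eq0 => /eqP -> _ i; rewrite coef0; exact: A0.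
have [-> _ _|p_neq0 size_p Ap_comp] := eqVneq p 0.
  by move=> i; rewrite coef0; exact: A0.
set d := (size p).-1; set c := lead_coef p.
have size_p_d : size p = d.+1 by rewrite prednK // lt0n size_poly_eq0.
have A_c : A c.
  have := lead_coef_comp p size_H; rewrite (monicP mon_H) expr1n mulr1 -/c => <-.
  exact: Ap_comp.
have size_Xd : size (c *: 'X^d) = d.+1.
  by rewrite size_scale ?lead_coef_eq0 // size_polyXn.
have lead_Xd : lead_coef (c *: 'X^d) = c by rewrite lead_coefZ lead_coefXn mulr1.
rewrite -(subrK (c *: 'X^d) p); apply: polyAD; last exact: polyAZ (polyAXn d).
apply: IHn.
  apply: leq_trans (size_sub_same_lead size_p_d size_Xd (esym lead_Xd)) _.
  by rewrite -ltnS -size_p_d.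
rewrite comp_polyB comp_polyZ comp_Xn_poly.
by apply: polyAB => //; apply: polyAZ => //; apply: polyAX.
Qed.

(* One step of the downward recursion: if the coefficients of H above degree
   j lie in A, so does H_j, which by coef_comp_recover is a difference of such
   quantities divided by m = deg G. *)
Lemma polyA_comp_right_step (G H : {poly K}) m n j :
  G \is monic -> H \is monic -> size G = m.+1 -> size H = n.+1 ->
  (0 < m)%N -> (0 < j < n)%N -> polyA (G \Po H) ->
  (forall i, (j < i)%N -> A H`_i) -> A H`_j.
Proof.
move=> mon_G mon_H size_G size_H m_gt0 j_bounds A_comp A_high.
set k := (j + m.-1 * n)%N; set H' := H - take_poly j.+1 H.
have A_H' : polyA H'.
  move=> i; rewrite coefB coef_take_poly.
  case: ltnP => [_|lt_ji]; first by rewrite subrr; exact: A0.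
  by rewrite subr0; exact: A_high.
have m_neq0 : (m%:R : K) != 0 by rewrite ((pcharf0P K).1 charK0) -lt0n.
have -> : H`_j = ((G \Po H)`_k - (H' ^+ m)`_k) / m%:R.
  by rewrite (coef_comp_recover mon_G mon_H) // addrC addKr -[_ *+ m]mulr_natr mulfK.
by apply: A_divn => //; apply: AB => //; exact: polyAX.
Qed.

Lemma polyA_comp_right (G H : {poly K}) m n :
  G \is monic -> H \is monic -> size G = m.+1 -> size H = n.+1 ->
  (0 < m)%N -> A H`_0 -> polyA (G \Po H) -> polyA H.
Proof.
move=> mon_G mon_H size_G size_H m_gt0 A_H0 A_comp.
suff A_above t : forall i, (n - t <= i)%N -> A H`_i by move=> i; apply: (A_above n); lia.
elim: t => [|t IHt] i le_i.
  have [->|ne_in] := eqVneq i n.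
    by move: (monicP mon_H); rewrite lead_coefE size_H /= => ->.
  by rewrite nth_default ?size_H; [exact: A0 | lia].
have [|lt_i] := leqP (n - t) i; first exact: IHt.
have [->|i_gt0] := posnP i; first exact: A_H0.
apply: (polyA_comp_right_step mon_G mon_H size_G size_H) => //; first lia.
by move=> i' lt_ii'; apply: IHt; lia.
Qed.

Lemma polyA_decomposition (G H : {poly K}) : G \is monic -> H \is monic ->
  G`_0 = 0 -> H`_0 = 0 -> polyA (G \Po H) -> polyA G /\ polyA H.
Proof.
move=> mon_G mon_H G0 H0 A_comp.
have G_gt1 := monic_coef0_size mon_G G0; have H_gt1 := monic_coef0_size mon_H H0.
have size_G : size G = (size G).-1.+1 by rewrite prednK // ltnW.
have size_H : size H = (size H).-1.+1 by rewrite prednK // ltnW.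
have A_H : polyA H.
  apply: (polyA_comp_right mon_G mon_H size_G size_H) => //.
    by rewrite -ltnS -size_G.
  by rewrite H0; exact: A0.
by split => //; exact: polyA_comp_left mon_H H_gt1 A_H A_comp.
Qed.

End CoefficientsInQSubring.

Section QROfFraction.
Variables (S : idomainType) (R : {pred S}).
Hypothesis charS0 : [pchar S] =i pred0.
Hypothesis subR : subring_closed R.
HB.instance Definition _ := GRing.isSubringClosed.Build S R subR.
Local Notation K := {fraction S}.

(* [in_QR R x] is [QR (tofrac x)] by definition. *)
Definition QR (x : K) : Prop :=
  exists (r : S) (n : nat), [/\ r \in R, (0 < n)%N & x = tofrac r / n%:R].

Lemma pchar_fraction0 : [pchar K] =i pred0.
Proof.
apply/pcharf0P => n; rewrite -(rmorph_nat (@tofrac S)) tofrac_eq0.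
by move/pcharf0P: charS0.
Qed.

Lemma natK_neq0 n : (0 < n)%N -> (n%:R : K) != 0.
Proof. by rewrite ((pcharf0P K).1 pchar_fraction0) -lt0n. Qed.

Lemma QR1 : QR 1.
Proof. by exists 1, 1%N; rewrite rpred1 tofrac1 divr1. Qed.

Lemma QRB x y : QR x -> QR y -> QR (x - y).
Proof.
move=> [a [n1 [Ra n1_gt0 ->]]] [b [n2 [Rb n2_gt0 ->]]].
exists (a * n2%:R - b * n1%:R), (n1 * n2)%N; split; rewrite ?muln_gt0 ?n1_gt0 //.
  by rewrite rpredB ?rpredM ?rpred_nat.
rewrite -mulNr addf_div ?natK_neq0 // mulNr natrM.
by rewrite tofracB !tofracM !rmorph_nat.
Qed.

Lemma QRM x y : QR x -> QR y -> QR (x * y).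
Proof.
move=> [a [n1 [Ra n1_gt0 ->]]] [b [n2 [Rb n2_gt0 ->]]].
exists (a * b), (n1 * n2)%N; split; rewrite ?muln_gt0 ?n1_gt0 ?rpredM //.
by rewrite tofracM natrM mulf_div.
Qed.

Lemma QR_divn x n : (0 < n)%N -> QR x -> QR (x / n%:R).
Proof.
move=> n_gt0 [a [n1 [Ra n1_gt0 ->]]].
exists a, (n1 * n)%N; split; rewrite ?muln_gt0 ?n1_gt0 //.
by rewrite natrM invfM mulrA.
Qed.

End QROfFraction.

Unset Implicit Arguments. Set Strict Implicit.

Theorem proposition2p1 (S : idomainType) (R : {pred S})
  (charS0 : [pchar S] =i pred0) (subR : subring_closed R)
  (g h : {poly S}) (gmon : g \is monic) (hmon : h \is monic)
  (g0 : g`_0 = 0) (h0 : h`_0 = 0)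
  (ghR : forall i : nat, (g \Po h)`_i \in R) :
  (forall i : nat, in_QR R g`_i) /\ (forall i : nat, in_QR R h`_i).
Proof.
have QR_comp : polyA (QR R) (map_poly (@tofrac S) g \Po map_poly (@tofrac S) h).
  rewrite -map_comp_poly => i; rewrite coef_map.
  by exists (g \Po h)`_i, 1%N; rewrite divr1.
have gK0 : (map_poly (@tofrac S) g)`_0 = 0 by rewrite coef_map g0 raddf0.
have hK0 : (map_poly (@tofrac S) h)`_0 = 0 by rewrite coef_map h0 raddf0.
have [QR_g QR_h] := polyA_decomposition (pchar_fraction0 charS0) (QR1 subR)
  (QRB charS0 subR) (QRM subR) (@QR_divn S R)
  (monic_map _ gmon) (monic_map _ hmon) gK0 hK0 QR_comp.
by split => i; [move: (QR_g i) | move: (QR_h i)]; rewrite coef_map.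
Qed.
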